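(* Let $T$ be a tree with positive edge weights rooted at the homebase $r$, let $q\ge 0$, and let $v$ be an internal vertex of $T$, i.e., a vertex different from $r$ with exactly one child. In a cost-optimal strategy exploring $T$, an agent occupying $v$ never returns, in its next move, to the vertex it occupied just before $v$.
   Context: Exploration model: given a connected graph with positive edge weights, a homebase vertex, and invoking cost $q\ge 0$, a strategy is a sequence of moves, each either invoking a new agent (appearing at the homebase) or an agent traversing an edge incident to its current vertex. A vertex is explored when first visited; the strategy explores the graph when every vertex has been visited by some agent (agents need not return). With $k$ agents, agent $i$ traversing total distance $d_i$ (weights counted with multiplicity), the cost is $kq+\sum_i d_i$; a strategy is cost-optimal if it explores the graph with minimum cost (off-line setting). *)

From HB Require Import structures.
From mathcomp Require Import all_boot all_order all_algebra.
Set Implicit Arguments. Unset Strict Implicit. Unset Printing Implicit Defensive.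
Import Order.TTheory GRing.Theory Num.Theory.
Local Open Scope ring_scope.

Definition simple_graph (T : finType) (e : rel T) : Prop :=
  symmetric e /\ irreflexive e.

(* A tree: a connected simple graph with no cycle (a cycle being a closed walk
   through at least 3 pairwise distinct vertices). *)
Definition is_tree (T : finType) (e : rel T) : Prop :=
  [/\ simple_graph e,
      (forall x y : T, connect e x y) &
      (forall c : seq T, ucycle e c -> (size c < 3)%N)].

(* c is a child of v in the tree e rooted at r: c is adjacent to v and every
   path from r to c passes through v. *)
Definition is_child (T : finType) (e : rel T) (r v c : T) : bool :=
  e v c && ~~ connect [rel x y | [&& e x y, x != v & y != v]] r c.

(* A move: invoke a new agent (it appears at the homebase), or agent number i
   (agents are numbered 0,1,... in order of invocation) traverses the edge
   from its current vertex to y. *)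
Inductive move (T : Type) : Type :=
  | Invoke : move T
  | Step : nat -> T -> move T.
Arguments Invoke {T}.

Section Strategy.
Variables (T : finType) (e : rel T) (r : T).

(* positions of the invoked agents, agent i at index i *)
Definition stepf (pos : seq T) (m : move T) : seq T :=
  match m with
  | Invoke => rcons pos r
  | Step i y => set_nth r pos i y
  end.

Definition okmove (pos : seq T) (m : move T) : bool :=
  match m with
  | Invoke => true
  | Step i y => (i < size pos)%N && e (nth r pos i) y
  end.

Definition state (s : seq (move T)) (n : nat) : seq T :=
  foldl stepf [::] (take n s).

Definition valid (s : seq (move T)) : Prop :=
  forall n, (n < size s)%N -> okmove (state s n) (nth Invoke s n).

Definition explores (s : seq (move T)) : Prop :=
  valid s /\ forall x : T, exists n, (n <= size s)%N /\ x \in state s n.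

Definition agent_of (m : move T) : option nat :=
  match m with Invoke => None | Step i _ => Some i end.

Variables (R : realFieldType) (w : T -> T -> R) (q : R).

Definition move_cost (pos : seq T) (m : move T) : R :=
  match m with
  | Invoke => q
  | Step i y => w (nth r pos i) y
  end.

Definition cost (s : seq (move T)) : R :=
  \sum_(0 <= n < size s) move_cost (state s n) (nth Invoke s n).

Definition cost_optimal (s : seq (move T)) : Prop :=
  explores s /\ forall s', explores s' -> cost s <= cost s'.

End Strategy.

From mathcomp Require Import all_boot all_order all_algebra.
From mathcomp Require Import lra.
Import Order.TTheory GRing.Theory Num.Theory.
Local Open Scope ring_scope.
Set Implicit Arguments. Unset Strict Implicit.

(* Suppose agent i moves from u to v and its next move is back to u.  Deleting
   these two moves leaves the moves of the other agents unchanged, only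
   agent i sits at u instead of v in between, so the shortened strategy is
   still valid, costs w(u,v) + w(v,u) > 0 less, and visits every vertex except
   possibly v.  But v is visited anyway: v has a child c, which is visited, and
   every walk from the homebase r to c passes through v.  This contradicts
   optimality. *)

Lemma set_nth_nth (T : Type) (x0 : T) (s : seq T) n :
  (n < size s)%N -> set_nth x0 s n (nth x0 s n) = s.
Proof.
move=> lt_n; apply: (@eq_from_nth _ x0) => [|k _].
  by rewrite size_set_nth (maxn_idPr lt_n).
by rewrite nth_set_nth /=; case: eqP => // ->.
Qed.

Lemma mem_set_nth (T : eqType) (x0 : T) (s : seq T) n y z :
  (n < size s)%N -> z \in set_nth x0 s n y -> z = y \/ z \in s.
Proof.
move=> lt_n /(nthP x0) [k]; rewrite size_set_nth (maxn_idPr lt_n) nth_set_nth /=.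
by case: eqP => [_ _ <-|_ lt_k <-]; [left | right; apply: mem_nth].
Qed.

Lemma cat_take_nth2_drop (T : Type) (x0 : T) (s : seq T) t1 t2 :
  (t1 < t2 < size s)%N ->
  s = take t1 s ++
      (nth x0 s t1 :: rcons (drop t1.+1 (take t2 s)) (nth x0 s t2)) ++
      drop t2.+1 s.
Proof.
case/andP=> lt12 lt2s.
rewrite /= cat_rcons -(drop_nth x0 lt2s) -(subnK lt12) -take_drop -drop_drop cat_take_drop.
by rewrite -drop_nth ?cat_take_drop // (ltn_trans lt12 lt2s).
Qed.

Lemma all_drop_take (T : Type) (x0 : T) (P : pred T) (s : seq T) t1 t2 :
  (t2 <= size s)%N -> (forall t, (t1 < t < t2)%N -> P (nth x0 s t)) ->
  all P (drop t1.+1 (take t2 s)).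
Proof.
move=> le2s between; apply/(all_nthP x0) => k.
rewrite size_drop size_takel // ltn_subRL => lt_k.
by rewrite nth_drop nth_take //; apply: between; rewrite lt_k ltnS leq_addr.
Qed.

Section Runs.
Variables (T : finType) (e : rel T) (r : T).

Local Notation run := (foldl (stepf r)).

Fixpoint valid_from (pos : seq T) (s : seq (move T)) : bool :=
  if s is m :: s' then okmove e r pos m && valid_from (stepf r pos m) s'
  else true.

Fixpoint visits_from (pos : seq T) (s : seq (move T)) (x : T) : bool :=
  (x \in pos) || (if s is m :: s' then visits_from (stepf r pos m) s' x else false).

Lemma valid_fromP pos s :
  (forall n, (n < size s)%N -> okmove e r (run pos (take n s)) (nth Invoke s n))
  <-> valid_from pos s.
Proof.
elim: s pos => [|m s IH] pos /=; first by split.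
split=> [ok_s | /andP[ok_m /IH ok_s] [|n] //=]; last exact: ok_s.
by rewrite (ok_s 0%N isT); apply/IH => n; apply: (ok_s n.+1).
Qed.

Lemma visits_fromP pos s x :
  (exists n, (n <= size s)%N /\ x \in run pos (take n s)) <-> visits_from pos s x.
Proof.
elim: s pos => [|m s IH] pos /=.
  by rewrite orbF; split=> [[[|n] []] | x_pos] //; exists 0%N.
split=> [[[|n] [/= le_n x_n]] | /orP[x_pos | /IH [n [le_n x_n]]]].
- by rewrite x_n.
- by apply/orP; right; apply/IH; exists n.
- by exists 0%N.
- by exists n.+1.
Qed.

Lemma visits_from_run pos s x : x \in run pos s -> visits_from pos s x.
Proof. by move=> x_end; apply/visits_fromP; exists (size s); rewrite take_size. Qed.

Lemma valid_from_cat pos s1 s2 :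
  valid_from pos (s1 ++ s2) = valid_from pos s1 && valid_from (run pos s1) s2.
Proof. by elim: s1 pos => [|m s1 IH] pos //=; rewrite IH andbA. Qed.

Lemma visits_from_mem pos s x : x \in pos -> visits_from pos s x.
Proof. by case: s => [|m s] /= ->. Qed.

Lemma visits_from_cat pos s1 s2 x :
  visits_from pos (s1 ++ s2) x = visits_from pos s1 x || visits_from (run pos s1) s2 x.
Proof.
elim: s1 pos => [|m s1 IH] pos /=; last by rewrite IH orbA.
by rewrite orbF; case: (boolP (x \in pos)) => // /visits_from_mem ->.
Qed.

Lemma size_run pos s : (size pos <= size (run pos s))%N.
Proof.
elim: s pos => [|[|j y] s IH] pos //=; apply: leq_trans (IH _).
  by rewrite size_rcons.
by rewrite size_set_nth leq_maxr.
Qed.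

Definition avoids_agent i (s : seq (move T)) := all (fun m => agent_of m != Some i) s.

Section OtherAgents.
Variables (i : nat) (x : T).

Lemma stepf_set_nth pos m : (i < size pos)%N -> agent_of m != Some i ->
  stepf r (set_nth r pos i x) m = set_nth r (stepf r pos m) i x.
Proof.
case: m => [|j y] /= lt_i; last first.
  move=> not_i; rewrite set_set_nth; have [eq_ij|//] := eqVneq i j.
  by rewrite eq_ij eqxx in not_i.
move=> _; apply: (@eq_from_nth _ r) => [|k _].
  by rewrite size_rcons !size_set_nth size_rcons !maxnSS (maxn_idPr lt_i) maxnC
     (maxn_idPl (ltnW lt_i)).
rewrite nth_rcons !nth_set_nth /= nth_rcons size_set_nth (maxn_idPr lt_i).
by case: eqP => // ->; rewrite lt_i.
Qed.

Lemma okmove_set_nth pos m : (i < size pos)%N -> agent_of m != Some i ->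
  okmove e r (set_nth r pos i x) m = okmove e r pos m.
Proof.
case: m => [|j y] //= lt_i not_i.
rewrite size_set_nth (maxn_idPr lt_i) nth_set_nth /=; have [eq_ji|//] := eqVneq j i.
by rewrite eq_ji eqxx in not_i.
Qed.

Lemma run_set_nth pos s : (i < size pos)%N -> avoids_agent i s ->
  run (set_nth r pos i x) s = set_nth r (run pos s) i x.
Proof.
elim: s pos => [|m s IH] pos //= lt_i /andP[not_i avoids_s].
by rewrite stepf_set_nth // IH // (leq_trans lt_i (size_run _ [:: m])).
Qed.

Lemma valid_from_set_nth pos s : (i < size pos)%N -> avoids_agent i s ->
  valid_from (set_nth r pos i x) s = valid_from pos s.
Proof.
elim: s pos => [|m s IH] pos //= lt_i /andP[not_i avoids_s].
by rewrite okmove_set_nth // stepf_set_nth // IH // (leq_trans lt_i (size_run _ [:: m])).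
Qed.

Lemma visits_from_set_nth pos s z : (i < size pos)%N -> avoids_agent i s ->
  visits_from (set_nth r pos i x) s z -> z = x \/ visits_from pos s z.
Proof.
elim: s pos => [|m s IH] pos /= lt_i.
  by rewrite !orbF => _ /(mem_set_nth lt_i).
case/andP=> not_i avoids_s /orP[/(mem_set_nth lt_i) [->|z_pos] | ].
- by left.
- by right; rewrite z_pos.
have lt_i' : (i < size (stepf r pos m))%N := leq_trans lt_i (size_run _ [:: m]).
rewrite stepf_set_nth // => /(IH _ lt_i' avoids_s) [->|z_s]; first by left.
by right; rewrite z_s orbT.
Qed.

End OtherAgents.

Lemma nth_run_avoids pos i s : (i < size pos)%N -> avoids_agent i s ->
  nth r (run pos s) i = nth r pos i.
Proof.
move=> lt_i avoids_s.
by rewrite -{1}(set_nth_nth r lt_i) run_set_nth // nth_set_nth /= eqxx.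
Qed.

Definition avoiding v := [rel x y | [&& e x y, x != v & y != v]].

Lemma connect_avoiding_visits v pos s z :
  valid_from pos s -> {in pos, forall x, connect (avoiding v) r x} ->
  ~~ visits_from pos s v -> visits_from pos s z -> connect (avoiding v) r z.
Proof.
elim: s pos => [|m s IH] pos /=.
  by move=> _ reach_pos _; rewrite orbF; apply: reach_pos.
case/andP=> ok_m valid_s reach_pos; rewrite negb_or => /andP[v_pos not_v].
case/orP=> [/reach_pos // |]; apply: (IH _ valid_s) => // x {valid_s}.
case: m ok_m not_v => [|j y] /=.
  by move=> _ _; rewrite mem_rcons in_cons => /orP[/eqP -> | /reach_pos].
case/andP=> lt_j e_y not_v /(mem_set_nth lt_j) [-> | /reach_pos //].
have y_v : y != v.
  apply: contraNneq not_v => <-; apply/visits_from_mem/(nthP r).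
  by exists j; rewrite ?size_set_nth ?leq_maxl // nth_set_nth /= eqxx.
apply: connect_trans (reach_pos _ (mem_nth r lt_j)) (connect1 _).
by rewrite /= e_y y_v andbT; apply: contraNneq v_pos => <-; apply: mem_nth.
Qed.

Lemma visits_from_parent v c s :
  is_child e r v c -> valid_from [::] s ->
  visits_from [::] s c -> visits_from [::] s v.
Proof.
move=> /andP[e_vc not_reach] valid_s visits_c; apply/negPn/negP => not_v.
by rewrite (connect_avoiding_visits valid_s _ not_v visits_c) in not_reach.
Qed.

Variables (R : realFieldType) (w : T -> T -> R) (q : R).

Fixpoint cost_from (pos : seq T) (s : seq (move T)) : R :=
  if s is m :: s' then move_cost r w q pos m + cost_from (stepf r pos m) s' else 0.

Lemma cost_fromE pos s :
  \sum_(0 <= n < size s) move_cost r w q (run pos (take n s)) (nth Invoke s n)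
  = cost_from pos s.
Proof.
elim: s pos => [|m s IH] pos /=; first by rewrite big_geq.
by rewrite big_nat_recl // take0 /= -IH.
Qed.

Lemma cost_from_cat pos s1 s2 :
  cost_from pos (s1 ++ s2) = cost_from pos s1 + cost_from (run pos s1) s2.
Proof. by elim: s1 pos => [|m s1 IH] pos /=; rewrite ?add0r // IH addrA. Qed.

Lemma cost_from_set_nth pos i x s : (i < size pos)%N -> avoids_agent i s ->
  cost_from (set_nth r pos i x) s = cost_from pos s.
Proof.
elim: s pos => [|m s IH] pos //= lt_i /andP[not_i avoids_s].
have lt_i' : (i < size (stepf r pos m))%N := leq_trans lt_i (size_run _ [:: m]).
rewrite stepf_set_nth // IH //; congr (_ + _).
case: m not_i {lt_i' IH avoids_s} => [|j y] //= not_i.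
rewrite nth_set_nth /=; have [eq_ji|//] := eqVneq j i.
by rewrite eq_ji eqxx in not_i.
Qed.

Definition round_trip pos i v (b : seq (move T)) :=
  Step i v :: rcons b (Step i (nth r pos i)).

Section RoundTrip.
Variables (pos : seq T) (i : nat) (v : T) (b : seq (move T)).
Hypotheses (lt_i : (i < size pos)%N) (avoids_b : avoids_agent i b).

Lemma run_round_trip : run pos (round_trip pos i v b) = run pos b.
Proof.
rewrite /= foldl_rcons run_set_nth //= set_set_nth eqxx -(nth_run_avoids lt_i avoids_b).
by rewrite set_nth_nth // (leq_trans lt_i (size_run _ _)).
Qed.

Lemma valid_from_round_trip : valid_from pos (round_trip pos i v b) -> valid_from pos b.
Proof.
by rewrite /= -cats1 valid_from_cat valid_from_set_nth // => /and3P[].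
Qed.

Lemma visits_from_round_trip x :
  visits_from pos (round_trip pos i v b) x -> x = v \/ visits_from pos b x.
Proof.
have lt_i_end : (i < size (run pos b))%N := leq_trans lt_i (size_run _ _).
have := run_round_trip; rewrite /= foldl_rcons -cats1 visits_from_cat /= orbF => ->.
rewrite run_set_nth //.
case/or4P=> [/visits_from_mem | /(visits_from_set_nth lt_i avoids_b) //
            | /(mem_set_nth lt_i_end) [|/visits_from_run] | /visits_from_run];
  by [left | right].
Qed.

Lemma cost_from_round_trip :
  cost_from pos (round_trip pos i v b)
  = cost_from pos b + (w (nth r pos i) v + w v (nth r pos i)).
Proof.
rewrite /= -cats1 cost_from_cat cost_from_set_nth //= run_set_nth //.
by rewrite nth_set_nth /= eqxx addr0 addrCA addrA.
Qed.

End RoundTrip.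

Section DropRoundTrip.
Variables (pos : seq T) (a b c : seq (move T)) (i : nat) (v : T).
Hypotheses (lt_i : (i < size (run pos a))%N) (avoids_b : avoids_agent i b).

Local Notation u := (nth r (run pos a) i).
Local Notation trip := (round_trip (run pos a) i v b).

Lemma valid_from_drop_round_trip :
  valid_from pos (a ++ trip ++ c) -> valid_from pos (a ++ b ++ c).
Proof.
rewrite !valid_from_cat (run_round_trip _ lt_i avoids_b).
by case/and3P=> -> /(valid_from_round_trip lt_i avoids_b) -> ->.
Qed.

Lemma visits_from_drop_round_trip x :
  visits_from pos (a ++ trip ++ c) x -> x = v \/ visits_from pos (a ++ b ++ c) x.
Proof.
rewrite !visits_from_cat (run_round_trip _ lt_i avoids_b).
case/or3P=> [x_a | /(visits_from_round_trip lt_i avoids_b) [->|x_b] | x_c].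
- by right; rewrite x_a.
- by left.
- by right; rewrite x_b orbT.
- by right; rewrite x_c !orbT.
Qed.

Lemma cost_from_drop_round_trip :
  cost_from pos (a ++ trip ++ c) = cost_from pos (a ++ b ++ c) + (w u v + w v u).
Proof.
rewrite !cost_from_cat (run_round_trip _ lt_i avoids_b).
rewrite (cost_from_round_trip _ lt_i avoids_b); lra.
Qed.

End DropRoundTrip.

Lemma exploresE s :
  explores e r s <-> valid_from [::] s /\ forall x, visits_from [::] s x.
Proof.
by split=> -[valid_s visits_s]; split=> [|x];
  [apply/valid_fromP | apply/visits_fromP | apply/(valid_fromP [::]) | apply/(visits_fromP [::])].
Qed.

Lemma costE s : cost r w q s = cost_from [::] s.
Proof. exact: cost_fromE. Qed.

Lemma explores_drop_round_trip a b c i v child :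
  (i < size (run [::] a))%N -> avoids_agent i b ->
  is_child e r v child -> child != v ->
  explores e r (a ++ round_trip (run [::] a) i v b ++ c) -> explores e r (a ++ b ++ c).
Proof.
move=> lt_i avoids_b child_c child_v /exploresE[valid_s visits_s].
have valid_s' := valid_from_drop_round_trip lt_i avoids_b valid_s.
have visits_s' x : x != v -> visits_from [::] (a ++ b ++ c) x.
  move=> x_v; case: (visits_from_drop_round_trip lt_i avoids_b (visits_s x)) => //.
  by move=> x_eq; rewrite x_eq eqxx in x_v.
apply/exploresE; split=> // x; have [->|/visits_s' //] := eqVneq x v.
exact: visits_from_parent child_c valid_s' (visits_s' _ child_v).
Qed.

End Runs.

Theorem mainTheorem6 (R : realFieldType) (T : finType) (e : rel T)
  (w : T -> T -> R) (r : T) (q : R) (v : T) (s : seq (move T)) :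
  is_tree e ->
  (forall x y, e x y -> 0 < w x y) ->
  (forall x y, w x y = w y x) ->
  0 <= q ->
  v != r ->
  #|[set c | is_child e r v c]| = 1%N ->
  cost_optimal e r w q s ->
  forall (t1 t2 i : nat) (y : T),
    (t1 < t2 < size s)%N ->
    nth Invoke s t1 = Step i v ->
    nth Invoke s t2 = Step i y ->
    (forall t, (t1 < t < t2)%N -> agent_of (nth Invoke s t) != Some i) ->
    y != nth r (state r s t1) i.
Proof.
move=> [[sym_e irr_e] _ _] w_pos _ _ _ one_child [explores_s opt_s] t1 t2 i y.
move=> t12s st1 st2 between; apply/eqP => y_u.
have /andP[lt12 lt2s] := t12s.
have [child child_c] : exists child, is_child e r v child.
  have /card_gt0P [child] : (0 < #|[set c | is_child e r v c]|)%N by rewrite one_child.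
  by rewrite inE; exists child.
have child_v : child != v.
  by case/andP: child_c => e_vc _; apply: contraTneq e_vc => ->; rewrite irr_e.
have := explores_s.1 t1 (ltn_trans lt12 lt2s); rewrite st1 => /andP[lt_i e_uv].
have avoids : avoids_agent i (drop t1.+1 (take t2 s)) := all_drop_take (ltnW lt2s) between.
set a := take t1 s; set b := drop t1.+1 (take t2 s); set c := drop t2.+1 s.
have def_s : s = a ++ round_trip r (state r s t1) i v b ++ c.
  by rewrite {1}(cat_take_nth2_drop Invoke t12s) st1 st2 y_u.
move: explores_s; rewrite {1}def_s.
move=> /(explores_drop_round_trip lt_i avoids child_c child_v) /opt_s.
rewrite !costE {1}def_s cost_from_drop_round_trip //.
have := w_pos _ _ e_uv; rewrite sym_e in e_uv; have := w_pos _ _ e_uv; lra.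
Qed.
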